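(* Let $n\ge 2$. Let $\hat a_{i,i-1}>0$ and $\hat b_{i,i-1}\in\mathbb{R}$ for $2\le i\le n$; for $1\le m\le k\le n$ put $\hat a_{k,m}:=\prod_{i=m+1}^{k}\hat a_{i,i-1}$ (so $\hat a_{k,k}=1$) and $\hat b_{n,1}:=\sum_{k=2}^{n}\hat a_{n,k}\hat b_{k,k-1}$. Define $i^*$: if $\min_{2\le k\le n}\hat a_{k,1}\le1$, let $i^*\in\{2,\ldots,n\}$ be an index attaining this minimum; otherwise $i^*=1$. Let $\tau^1(t)=a_1t+b_1$ and $\tau^n(t)=a_nt+b_n$ with $a_1,a_n>0$, and set $a_{n,1}:=a_n/a_1$, $b_{n,1}:=b_n-a_{n,1}b_1$ (so $\tau^n(t)=a_{n,1}\tau^1(t)+b_{n,1}$ for all $t$). Let $t_1\le t_n$ be reals, and let $R_1:=\tau^1(t_1)$, $L_n:=\tau^n(t_n)$, and let $L_i$ ($2\le i\le n-1$) and $R_i$ ($2\le i\le n-1$) be reals such that $L_i=\hat a_{i,i-1}R_{i-1}+\hat b_{i,i-1}$ for all $2\le i\le n$ and $L_i\le R_i$ for $2\le i\le n-1$. Then $$\sum_{j=2}^{n-1}\bigl(R_j-L_j\bigr)\ge\frac{a_{n,1}-\hat a_{n,1}}{\hat a_{n,i^*}}\,R_1+\frac{b_{n,1}-\hat b_{n,1}}{\hat a_{n,i^*}}.$$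
   Context: Setting: a chain of nodes $1,\ldots,n$ whose endpoints $1$ and $n$ are good nodes with affine local clocks $\tau^1,\tau^n$ of the reference time $t$; node $1$ sends a timing packet at reference time $t_1$ (send time-stamp $R_1$) and node $n$ receives it at reference time $t_n\ge t_1$ (receive time-stamp $L_n$). Intermediate nodes $i$ append a receive time-stamp $L_i=\tau^{i,l}(t_{i,l})$ and a send time-stamp $R_i=\tau^{i,r}(t_{i,r})$ from arbitrary clocks; $R_j-L_j$ is node $j$'s forwarding delay. $\hat a_{i,i-1},\hat b_{i,i-1}$ are declared relative skews/offsets, $a_{n,1},b_{n,1}$ the true relative skew/offset of node $n$ with respect to node $1$. *)

From mathcomp Require Import all_boot all_order all_algebra.
Set Implicit Arguments. Unset Strict Implicit. Unset Printing Implicit Defensive.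
Import Order.TTheory GRing.Theory Num.Theory.
Local Open Scope ring_scope.

(* ahat i stands for \hat a_{i,i-1}, bhat i for \hat b_{i,i-1} (2 <= i <= n). *)

Definition ahat_km {R : realFieldType} (ahat : nat -> R) (k m : nat) : R :=
  \prod_(m.+1 <= i < k.+1) ahat i.

Definition bhat_n1 {R : realFieldType} (ahat bhat : nat -> R) (n : nat) : R :=
  \sum_(2 <= k < n.+1) ahat_km ahat n k * bhat k.

(* Each forwarding delay enters the end-to-end relation L_n = \hat a_{n,1} R_1 + \hat b_{n,1}
   + \sum_j \hat a_{n,j} (R_j - L_j), obtained by unrolling the affine chain
   L_i = \hat a_{i,i-1} R_{i-1} + \hat b_{i,i-1}.  The choice of i^* makes \hat a_{n,i^*}
   an upper bound of every weight \hat a_{n,j}, so the total delay, scaled by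
   \hat a_{n,i^*}, dominates L_n - \hat a_{n,1} R_1 - \hat b_{n,1}; finally t_1 <= t_n
   and a_n > 0 give L_n >= a_{n,1} R_1 + b_{n,1}. *)
From mathcomp Require Import all_boot all_order all_algebra.
From mathcomp Require Import ring lra zify.
Import Order.TTheory GRing.Theory Num.Theory.
Set Implicit Arguments. Unset Strict Implicit.
Local Open Scope ring_scope.

Section AhatProducts.

Variables (R : realFieldType) (a : nat -> R).

Lemma ahat_kk k : ahat_km a k k = 1.
Proof. by rewrite /ahat_km big_geq. Qed.

Lemma ahat_Sk k : ahat_km a k.+1 k = a k.+1.
Proof. by rewrite /ahat_km big_nat1. Qed.

Lemma ahat_kmM p m k :
  (p <= m <= k)%N -> ahat_km a k p = ahat_km a k m * ahat_km a m p.
Proof.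
by move=> /andP[pm mk]; rewrite /ahat_km (big_cat_nat _ (n := m.+1)) ?ltnS // mulrC.
Qed.

Lemma ahat_km_gt0 n m k :
  (forall i, (2 <= i <= n)%N -> 0 < a i) ->
  (1 <= m)%N -> (k <= n)%N -> 0 < ahat_km a k m.
Proof.
move=> a_gt0 m_ge1 k_le_n; rewrite /ahat_km big_nat_cond; apply: prodr_gt0 => i.
by move=> /andP[/andP[mi ik] _]; apply: a_gt0; lia.
Qed.

(* The solution of x_m = a_m x_{m-1} + c_m, with c_m written as x_m - a_m x_{m-1}
   so that the identity holds for every sequence x. *)
Lemma affine_chain_unroll (x : nat -> R) k : (1 <= k)%N ->
  x k = ahat_km a k 1 * x 1%N
        + \sum_(2 <= m < k.+1) ahat_km a k m * (x m - a m * x m.-1).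
Proof.
move=> k_ge1; rewrite big_add1 /=.
rewrite (@telescope_sumr_eq _ 1 k (fun i => ahat_km a k i * x i)) //.
  by rewrite ahat_kk mul1r addrC subrK.
move=> i /andP[_ ik] /=.
rewrite (@ahat_kmM i i.+1 k) ?leqnSn // ahat_Sk; ring.
Qed.

End AhatProducts.

Section Weights.

Variables (R : realFieldType) (n istar : nat) (ahat : nat -> R).
Hypothesis ahat_gt0 : forall i, (2 <= i <= n)%N -> 0 < ahat i.
Hypothesis istar_spec :
  ((2 <= istar <= n)%N /\
    (forall k, (2 <= k <= n)%N -> ahat_km ahat istar 1 <= ahat_km ahat k 1) /\
    ahat_km ahat istar 1 <= 1)
  \/
  ((forall k, (2 <= k <= n)%N -> 1 < ahat_km ahat k 1) /\ istar = 1%N).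

Lemma istar_ge1 : (1 <= istar)%N.
Proof. by case: istar_spec => [[/andP[+ _] _]|[_ ->]] //; lia. Qed.

Lemma ahat_n_istar_gt0 : 0 < ahat_km ahat n istar.
Proof. exact: ahat_km_gt0 ahat_gt0 istar_ge1 (leqnn n). Qed.

(* Both cases compare the factorizations
   \hat a_{n,1} = \hat a_{n,j} \hat a_{j,1} = \hat a_{n,i^*} \hat a_{i^*,1}. *)
Lemma ahat_n_le_istar j :
  (2 <= j <= n)%N -> ahat_km ahat n j <= ahat_km ahat n istar.
Proof.
move=> /andP[j_ge2 j_le_n].
have Aj1_gt0 : 0 < ahat_km ahat j 1 by apply: (ahat_km_gt0 ahat_gt0).
have Anj_gt0 : 0 < ahat_km ahat n j by apply: (ahat_km_gt0 ahat_gt0); lia.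
have An1_j : ahat_km ahat n 1 = ahat_km ahat n j * ahat_km ahat j 1.
  by apply: ahat_kmM; lia.
case: istar_spec => [[/andP[i_ge2 i_le_n] [istar_min _]] | [Ak1_gt1 ->]].
- have An1_i : ahat_km ahat n 1 = ahat_km ahat n istar * ahat_km ahat istar 1.
    by apply: ahat_kmM; lia.
  rewrite -(ler_pM2r Aj1_gt0) -An1_j An1_i ler_wpM2l ?istar_min ?j_ge2 //.
  exact/ltW/ahat_n_istar_gt0.
- have Aj1_gt1 : 1 < ahat_km ahat j 1 by apply: Ak1_gt1; lia.
  by rewrite An1_j -[leLHS]mulr1 ler_wpM2l ?ltW.
Qed.

End Weights.

Lemma chain_end_to_end (R : realFieldType) (n : nat) (ahat bhat L Rs : nat -> R) :
  (2 <= n)%N ->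
  (forall i, (2 <= i <= n)%N -> L i = ahat i * Rs i.-1 + bhat i) ->
  L n = ahat_km ahat n 1 * Rs 1%N + bhat_n1 ahat bhat n
        + \sum_(2 <= j < n) ahat_km ahat n j * (Rs j - L j).
Proof.
move=> n_ge2 HL.
(* The chain R_1, ..., R_{n-1}, L_n: its innovations are \hat b_m + (R_m - L_m)
   for m < n and \hat b_n at m = n. *)
pose x k := if (k < n)%N then Rs k else L n.
have -> : L n = x n by rewrite /x ltnn.
rewrite (affine_chain_unroll ahat); last lia.
rewrite /bhat_n1 !big_nat_recr /=; try lia.
rewrite [x n]/x [x 1%N]/x [x n.-1]/x ltnn n_ge2 ltn_predL (ltnW n_ge2) HL; last lia.
rewrite ahat_kk.
have -> : \sum_(2 <= m < n) ahat_km ahat n m * (x m - ahat m * x m.-1)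
        = \sum_(2 <= m < n) ahat_km ahat n m * bhat m
          + \sum_(2 <= j < n) ahat_km ahat n j * (Rs j - L j).
  rewrite -big_split; apply: eq_big_nat => m /andP[m_ge2 m_lt_n] /=.
  rewrite /x m_lt_n (ltn_trans _ m_lt_n) ?ltn_predL ?(leq_trans _ m_ge2) //.
  rewrite HL; [ring | lia].
ring.
Qed.

Theorem lemma5 (R : realFieldType) (n : nat) (ahat bhat : nat -> R)
    (istar : nat) (a1 b1 an bn t1 tn : R) (L Rs : nat -> R) :
  (2 <= n)%N ->
  (forall i, (2 <= i <= n)%N -> 0 < ahat i) ->
  ( ((2 <= istar <= n)%N /\
     (forall k, (2 <= k <= n)%N -> ahat_km ahat istar 1 <= ahat_km ahat k 1) /\
     ahat_km ahat istar 1 <= 1)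
    \/
    ((forall k, (2 <= k <= n)%N -> 1 < ahat_km ahat k 1) /\ istar = 1%N) ) ->
  0 < a1 -> 0 < an ->
  t1 <= tn ->
  Rs 1%N = a1 * t1 + b1 ->
  L n = an * tn + bn ->
  (forall i, (2 <= i <= n)%N -> L i = ahat i * Rs i.-1 + bhat i) ->
  (forall i, (2 <= i <= n.-1)%N -> L i <= Rs i) ->
  \sum_(2 <= j < n) (Rs j - L j) >=
    (an / a1 - ahat_km ahat n 1) / ahat_km ahat n istar * Rs 1%N
    + (bn - an / a1 * b1 - bhat_n1 ahat bhat n) / ahat_km ahat n istar.
Proof.
move=> n_ge2 ahat_gt0 istar_spec a1_gt0 an_gt0 t1_le_tn HR1 HLn HL delay_ge0.
have A_gt0 := ahat_n_istar_gt0 ahat_gt0 istar_spec.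
set A := ahat_km ahat n istar.
have weighted_le : \sum_(2 <= j < n) ahat_km ahat n j * (Rs j - L j)
                   <= A * \sum_(2 <= j < n) (Rs j - L j).
  rewrite mulr_sumr; apply: ler_sum_nat => j /andP[j_ge2 j_lt_n].
  rewrite ler_wpM2r ?subr_ge0 ?delay_ge0 ?(ahat_n_le_istar ahat_gt0 istar_spec) //;
    lia.
have end_to_end := chain_end_to_end n_ge2 HL.
rewrite HLn in end_to_end.
rewrite !(mulrAC _ A^-1) -mulrDl ler_pdivrMr //.
have q_a1 : an / a1 * a1 = an by rewrite mulfVK ?gt_eqF.
have q_R1 : an / a1 * Rs 1%N = an * t1 + an / a1 * b1 by rewrite HR1 mulrDr mulrA q_a1.
have an_t : an * t1 <= an * tn by rewrite ler_pM2l.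
rewrite /bhat_n1 in end_to_end *; lra.
Qed.
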